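(* Let $M\ge 2$, $\epsilon>0$, and rates $R_1,\dots,R_M>0$ with order statistics $R_{(1)}\le\dots\le R_{(M)}$, so $R_{(M)}=\max\{R_1,\dots,R_M\}$; set $R_{key}=\sum_{i=1}^{M-1}R_{(i)}$. Let $W_1,\dots,W_M$ be independent with $W_i$ uniform on $\mathcal W_i=\{1,\dots,2^{nR_i}\}$, and $W^M=(W_1,\dots,W_M)$. Let $\mathcal C$ be a random codebook obtained by partitioning $\mathcal W^M=\mathcal W_1\times\dots\times\mathcal W_M$ uniformly at random into $2^{n(R_{key}-\epsilon)}$ bins, each containing $2^{n(R_{(M)}+\epsilon)}$ elements (independently of $W^M$), and let $K_A$ be the index of the bin containing $W^M$. Then for every $m\in\{1,\dots,M\}$ and all sufficiently large $n$, $$H(W^M\mid W_m,K_A,\mathcal C)\le n\big(R_{(M)}-R_m+\delta(\epsilon)\big),$$ where $\delta(\epsilon)\to0$ as $\epsilon\to0$.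
   Context: Conditioning on $\mathcal C$ means the entropy is averaged over the random choice of the binning codebook. Exponents such as $2^{nR_i}$ are treated as integers (rounding as needed). *)

From HB Require Import structures.
From mathcomp Require Import all_boot.
From Stdlib Require Import Reals.

Set Implicit Arguments.
Unset Strict Implicit.
Unset Printing Implicit Defensive.

Definition log2 (x : R) : R := (ln x / ln 2)%R.

Definition Rsum (I : finType) (F : I -> R) : R := \big[Rplus/0%R]_(i : I) F i.

(* R_(M) = max of the rates (the rates are positive, so 0 is a neutral start) *)
Definition Rmaxf (M : nat) (r : 'I_M -> R) : R := \big[Rmax/0%R]_(i : 'I_M) r i.

(* R_key = sum of the M-1 smallest rates = total sum minus the largest one *)
Definition Rkey (M : nat) (r : 'I_M -> R) : R := (Rsum r - Rmaxf r)%R.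

(* ---------- rounding convention: 2^{n x} is read as 2^{floor(n x)} ---------- *)

Definition rate_exp (n : nat) (x : R) : nat := Z.to_nat (Int_part (INR n * x)).

Definition msg_exp (M : nat) (r : 'I_M -> R) (n : nat) (i : 'I_M) : nat :=
  rate_exp n (r i).
Definition msg_size (M : nat) (r : 'I_M -> R) (n : nat) (i : 'I_M) : nat :=
  2 ^ msg_exp r n i.
Definition tot_exp (M : nat) (r : 'I_M -> R) (n : nat) : nat :=
  \sum_(i < M) msg_exp r n i.

(* number of bins = 2^{floor(n (R_key - eps))} (capped so that bins can exist);
   bin size = |W^M| / number of bins, which is 2^{n (R_(M)+eps)} up to rounding *)
Definition bin_exp (M : nat) (r : 'I_M -> R) (eps : R) (n : nat) : nat :=
  minn (rate_exp n (Rkey r - eps)) (tot_exp r n).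
Definition nbins (M : nat) (r : 'I_M -> R) (eps : R) (n : nat) : nat :=
  2 ^ bin_exp r eps n.
Definition bin_size (M : nat) (r : 'I_M -> R) (eps : R) (n : nat) : nat :=
  2 ^ (tot_exp r n - bin_exp r eps n).

Definition msg_tuple (M : nat) (r : 'I_M -> R) (n : nat) : finType :=
  {dffun forall i : 'I_M, 'I_(msg_size r n i)}.

Definition is_binning (M : nat) (r : 'I_M -> R) (eps : R) (n : nat)
  (f : {ffun msg_tuple r n -> 'I_(nbins r eps n)}) : bool :=
  [forall b : 'I_(nbins r eps n), #|[pred x | f x == b]| == bin_size r eps n].

Definition codebook (M : nat) (r : 'I_M -> R) (eps : R) (n : nat) : finType :=
  {f : {ffun msg_tuple r n -> 'I_(nbins r eps n)} | is_binning f}.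

(* sample space: (C, W^M), uniform (C uniform over binnings, W^M uniform,
   independent of each other; W_i independent uniform) *)
Definition sample (M : nat) (r : 'I_M -> R) (eps : R) (n : nat) : finType :=
  (codebook r eps n * msg_tuple r n)%type.

Definition probU (O : finType) (E : pred O) : R := (INR #|E| / INR #|O|)%R.

(* conditional entropy H(X | Y) in bits, (0 log 0 = 0 convention automatic) *)
Definition cond_entropy (O A B : finType) (X : O -> A) (Y : O -> B) : R :=
  Rsum (fun a : A => Rsum (fun b : B =>
    let pab := probU [pred w | (X w == a) && (Y w == b)] in
    let pb  := probU [pred w | Y w == b] in
    (pab * log2 (pb / pab))%R)).

Definition rv_WM (M : nat) (r : 'I_M -> R) (eps : R) (n : nat)
  (w : sample r eps n) : msg_tuple r n := w.2.

Definition rv_K (M : nat) (r : 'I_M -> R) (eps : R) (n : nat)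
  (w : sample r eps n) : 'I_(nbins r eps n) := (val w.1) w.2.

Definition rv_cond (M : nat) (r : 'I_M -> R) (eps : R) (n : nat) (m : 'I_M)
  (w : sample r eps n) : ('I_(msg_size r n m) * 'I_(nbins r eps n) * codebook r eps n)%type :=
  (w.2 m, rv_K w, w.1).

From HB Require Import structures.
From mathcomp Require Import all_boot.
From Stdlib Require Import Reals Lra.
From mathcomp Require Import perm zify.

(* Since W^M together with (W_m, K_A, C) determines the whole sample point,
   H(W^M | W_m, K_A, C) is the average of log2 of the number of tuples that agree
   with W^M in coordinate m and share its bin; by concavity of log2 it is at most
   log2 of the average of that number.  A transposition of two tuples permutes the
   binnings, so two distinct tuples share a bin in the same number of binnings,
   a fraction (bin size - 1)/(|W^M| - 1) of them.  Hence the average number is at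
   most 1 + |bin| / |W_m|, roughly 2^(n (R_(M) + eps - R_m)), and rounding costs a
   constant, which gives delta(eps) = 2 eps. *)

Set Implicit Arguments.
Unset Strict Implicit.
Unset Printing Implicit Defensive.

Lemma card_sum_bool (T : finType) (P : {pred T}) : #|P| = \sum_(x : T) (x \in P).
Proof. by rewrite -sum1_card big_mkcond; apply: eq_bigr => x _; case: (x \in P). Qed.

Lemma card_perm_pred (T : finType) (p : {perm T}) (P : pred T) :
  #|[pred x | P (p x)]| = #|P|.
Proof. by rewrite !card_sum_bool [RHS](reindex_inj (@perm_inj _ p)). Qed.

Lemma sum_nat_const_D1 (T : finType) (A : pred T) (a : T) (k : nat) :
  a \in A -> \sum_(x in A | x != a) k = #|A|.-1 * k.
Proof.
move=> Aa; rewrite (cardD1 a A) Aa -(sum_nat_const [predD1 A & a]).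
by apply: eq_bigl => x; rewrite !inE andbC.
Qed.

Section RandomBinning.
Variables (T K : finType) (s : nat).

Definition equal_binning (f : {ffun T -> K}) : bool :=
  [forall k : K, #|[pred x | f x == k]| == s].

Local Notation binning := {f : {ffun T -> K} | equal_binning f}.

Lemma card_bin (c : binning) (k : K) : #|[pred x | val c x == k]| = s.
Proof. exact/eqP/(forallP (valP c)). Qed.

Lemma equal_binning_perm (p : {perm T}) (c : binning) :
  equal_binning [ffun x => val c (p x)].
Proof.
apply/forallP => k; rewrite -(card_bin c k) -(card_perm_pred p (fun y => val c y == k)).
by apply/eqP/eq_card => x; rewrite !inE ffunE.
Qed.

Definition permute_binning (p : {perm T}) (c : binning) : binning :=
  Sub _ (equal_binning_perm p c).

Definition ncollide (a a' : T) : nat :=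
  #|[pred c : binning | val c a' == val c a]|.

(* The transposition (a' b) fixes a and maps the binnings in which a' meets a
   onto those in which b meets a. *)
Lemma ncollide_eq (a a' b : T) : a' != a -> b != a -> ncollide a a' = ncollide a b.
Proof.
move=> a'a ba; pose p := tperm a' b.
have p_invol : involutive (permute_binning p).
  by move=> c; apply/val_inj/ffunP => x; rewrite !ffunE tpermK.
rewrite /ncollide !card_sum_bool (reindex_inj (inv_inj p_invol)).
by apply: eq_bigr => c _; rewrite !inE /= !ffunE tpermL tpermD.
Qed.

Lemma sum_ncollide (a : T) :
  \sum_(a' | a' != a) ncollide a a' = #|{: binning}| * s.-1.
Proof.
under eq_bigr => a' _ do rewrite /ncollide card_sum_bool.
rewrite exchange_big -sum_nat_const; apply: eq_bigr => c _.
by rewrite -(card_bin c (val c a)) card_sum_bool [in RHS](bigD1 a) /= ?inE ?eqxx.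
Qed.

Lemma sum_ncollide_in (A : pred T) (a : T) : a \in A ->
  (\sum_(a' in A | a' != a) ncollide a a') * #|T|.-1 =
  #|A|.-1 * (#|{: binning}| * s.-1).
Proof.
move=> Aa.
have term a' : a' != a -> ncollide a a' * #|T|.-1 = #|{: binning}| * s.-1.
  move=> a'a; rewrite -(sum_ncollide a) -(cardC1 a) mulnC -sum_nat_const.
  by apply: eq_big => [b|b ba]; [rewrite !inE | exact: ncollide_eq].
rewrite big_distrl /= (eq_bigr _ (fun a' a'Aa => term a' (andP a'Aa).2)).
exact: sum_nat_const_D1.
Qed.

Lemma sum_card_bin_meet_le (A : pred T) (a : T) : a \in A ->
  (\sum_(c : binning) #|[pred a' in A | val c a' == val c a]|) * #|T| <=
  #|{: binning}| * (#|T| + #|A| * s).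
Proof.
move=> Aa.
have -> : \sum_(c : binning) #|[pred a' in A | val c a' == val c a]| =
          #|{: binning}| + \sum_(a' in A | a' != a) ncollide a a'.
  transitivity (\sum_(c : binning) \sum_(a' in A) (val c a' == val c a)).
    apply: eq_bigr => c _; rewrite card_sum_bool [RHS]big_mkcond.
    by apply: eq_bigr => a' _; rewrite !inE; case: (a' \in A).
  rewrite exchange_big (bigD1 a) //=; congr (_ + _).
    by rewrite -sum1_card; apply: eq_bigr => c _; rewrite eqxx.
  by apply: eq_bigr => a' _; rewrite /ncollide card_sum_bool.
set X := \sum_(_ in A | _) _.
have X_eq := sum_ncollide_in Aa.
have X_le : X <= #|A|.-1 * #|{: binning}|.
  by rewrite -(sum_nat_const_D1 _ Aa) leq_sum // => a' _; exact: max_card.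
have A_le : #|A| <= #|T| := max_card A.
have A_gt0 : 0 < #|A| by apply/card_gt0P; exists a.
nia.
Qed.

End RandomBinning.

HB.instance Definition _ := Monoid.isComLaw.Build R 0%R Rplus
  (fun x y z => esym (Rplus_assoc x y z)) Rplus_comm Rplus_0_l.
HB.instance Definition _ := Monoid.isMulLaw.Build R 0%R Rmult Rmult_0_l Rmult_0_r.
HB.instance Definition _ :=
  Monoid.isAddLaw.Build R Rmult Rplus Rmult_plus_distr_r Rmult_plus_distr_l.

Section Rsum.
Variable I : finType.
Implicit Types F G : I -> R.

Lemma Rsum_le F G : (forall i, F i <= G i)%R -> (Rsum F <= Rsum G)%R.
Proof.
move=> FG; apply: (big_ind2 (fun x y => x <= y)%R) => //; first exact: Rle_refl.
by move=> *; apply: Rplus_le_compat.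
Qed.

Lemma RsumD F G : Rsum (fun i => F i + G i)%R = (Rsum F + Rsum G)%R.
Proof. exact: big_split. Qed.

Lemma RsumZ F a : Rsum (fun i => a * F i)%R = (a * Rsum F)%R.
Proof. by rewrite /Rsum big_distrr. Qed.

Lemma Rsum_const c : Rsum (fun _ : I => c) = (INR #|I| * c)%R.
Proof.
rewrite /Rsum big_const; elim: #|I| => [|k IH]; first by rewrite /=; lra.
by rewrite iterS IH S_INR; lra.
Qed.

Lemma INR_sum (f : I -> nat) : INR (\sum_(i : I) f i) = Rsum (fun i => INR (f i)).
Proof. by apply: (big_morph INR) => // x y; rewrite plus_INR. Qed.

Lemma Rsum_gt0 F (i0 : I) : (forall i, 0 < F i)%R -> (0 < Rsum F)%R.
Proof.
move=> F_gt0; rewrite /Rsum (bigD1 i0) //=.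
have : (0 <= \big[Rplus/0%R]_(i | i != i0) F i)%R.
  apply: (big_ind (fun x => 0 <= x)%R) => [|x y|i _]; first exact: Rle_refl.
    exact: Rplus_le_le_0_compat.
  exact/Rlt_le.
by have := F_gt0 i0; lra.
Qed.

End Rsum.

Lemma Rsum_pair (A B : finType) (F : A -> B -> R) :
  Rsum (fun a => Rsum (F a)) = Rsum (fun p : A * B => F p.1 p.2).
Proof. by rewrite /Rsum pair_bigA. Qed.

Lemma ln_le_sub1 x : (0 < x)%R -> (ln x <= x - 1)%R.
Proof. by move=> x_gt0; have := exp_ineq1_le (ln x); rewrite exp_ln //; lra. Qed.

(* Apply ln y <= y - 1 at y = x i / mean and sum. *)
Lemma sum_ln_le (I : finType) (x : I -> R) (i0 : I) : (forall i, 0 < x i)%R ->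
  (Rsum (fun i => ln (x i)) <= INR #|I| * ln (Rsum x / INR #|I|))%R.
Proof.
move=> x_gt0.
have N_gt0 : (0 < INR #|I|)%R by apply/lt_0_INR/ltP/card_gt0P; exists i0.
have S_gt0 := Rsum_gt0 i0 x_gt0.
set mu := (Rsum x / INR #|I|)%R.
have mu_gt0 : (0 < mu)%R by exact: Rdiv_lt_0_compat.
have pointwise i : (ln (x i) <= ln mu + (/ mu * x i + -1))%R.
  have := ln_le_sub1 (Rdiv_lt_0_compat _ _ (x_gt0 i) mu_gt0).
  rewrite /Rdiv ln_mult ?ln_Rinv //; last exact: Rinv_0_lt_compat.
  by rewrite Rmult_comm; lra.
apply: Rle_trans (Rsum_le pointwise) _.
rewrite !RsumD RsumZ !Rsum_const.
have -> : (/ mu * Rsum x = INR #|I|)%R by rewrite /mu; field; lra.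
lra.
Qed.

Lemma ln2_gt0 : (0 < ln 2)%R.
Proof. by rewrite -ln_1; apply: ln_increasing; lra. Qed.

Lemma log2_le x y : (0 < x)%R -> (x <= y)%R -> (log2 x <= log2 y)%R.
Proof.
move=> x_gt0 xy; rewrite /log2 /Rdiv; apply: Rmult_le_compat_r.
  exact/Rlt_le/Rinv_0_lt_compat/ln2_gt0.
case: (Rle_lt_or_eq_dec _ _ xy) => [x_lt_y | ->]; last exact: Rle_refl.
exact/Rlt_le/ln_increasing.
Qed.

Lemma log2_ge0 x : (1 <= x)%R -> (0 <= log2 x)%R.
Proof.
by move=> x_ge1; have := log2_le Rlt_0_1 x_ge1; rewrite /log2 ln_1 /Rdiv Rmult_0_l.
Qed.

Lemma log2_pow2 k : log2 (INR (2 ^ k)) = INR k.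
Proof.
have INR2 : INR 2 = 2%R by rewrite /=; lra.
rewrite /log2 pow_INR INR2 ln_pow; last lra.
by have := ln2_gt0 => ?; field; lra.
Qed.

Lemma sum_log2_le (I : finType) (x : I -> R) (i0 : I) : (forall i, 0 < x i)%R ->
  (Rsum (fun i => log2 (x i)) <= INR #|I| * log2 (Rsum x / INR #|I|))%R.
Proof.
move=> x_gt0.
have -> : Rsum (fun i => log2 (x i)) = (/ ln 2 * Rsum (fun i => ln (x i)))%R.
  by rewrite -RsumZ; apply: eq_bigr => i _; rewrite /log2 /Rdiv Rmult_comm.
apply: (Rle_trans _ (/ ln 2 * (INR #|I| * ln (Rsum x / INR #|I|)))%R).
  apply: Rmult_le_compat_l; first exact/Rlt_le/Rinv_0_lt_compat/ln2_gt0.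
  exact: sum_ln_le.
by right; rewrite /log2 /Rdiv; ring.
Qed.

Section DeterminedEntropy.
Variables (O A B : finType) (X : O -> A) (Y : O -> B).
Hypothesis XY_inj : injective (fun o => (X o, Y o)).

Lemma card_XY_fiber (o : O) :
  #|[pred w | (X w == X o) && (Y w == Y o)]| = 1.
Proof.
apply: (eq_card1 (x := o)) => w; rewrite !inE.
apply/andP/eqP => [[/eqP Xw /eqP Yw] | ->]; last by [].
by apply: XY_inj; rewrite /= Xw Yw.
Qed.

Lemma cond_entropy_determined :
  cond_entropy X Y = Rsum (fun o => log2 (INR #|[pred w | Y w == Y o]|) / INR #|O|)%R.
Proof.
rewrite /cond_entropy Rsum_pair /Rsum /probU.
rewrite (bigID [pred p | p \in [set (X o, Y o) | o in O]]) /=.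
rewrite [u in (_ + u)%R]big1 ?Rplus_0_r; last first.
  move=> [a b] /imsetP no_o.
  have -> : #|[pred w | (X w == a) && (Y w == b)]| = 0.
    apply: eq_card0 => w; rewrite !inE; apply/negP => /andP[/eqP Xw /eqP Yw].
    by apply: no_o; exists w; rewrite ?inE ?Xw ?Yw.
  by rewrite /Rdiv !Rmult_0_l.
rewrite big_imset /=; last by move=> o o' _ _; exact: XY_inj.
apply: eq_bigr => o _; rewrite card_XY_fiber.
have O_gt0 : (0 < INR #|O|)%R by apply/lt_0_INR/ltP/card_gt0P; exists o.
have cancelN k : (k / INR #|O| / (INR 1 / INR #|O|) = k)%R.
  by rewrite INR_1; field; lra.
by rewrite cancelN INR_1 /Rdiv Rmult_1_l Rmult_comm.
Qed.

Lemma cond_entropy_determined_le (k : R) : (1 <= k)%R ->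
  (INR (\sum_o #|[pred w | Y w == Y o]|) <= INR #|O| * k)%R ->
  (cond_entropy X Y <= log2 k)%R.
Proof.
move=> k_ge1 fibers_le; rewrite cond_entropy_determined.
have [O0 | /card_gt0P[o0 _]] := posnP #|O|.
  (* every term divides by INR 0, and x / 0 = 0 *)
  rewrite /Rsum big1 => [|o _]; first exact: log2_ge0.
  by rewrite O0 /= /Rdiv Rinv_0 Rmult_0_r.
have O_gt0 : (0 < INR #|O|)%R by apply/lt_0_INR/ltP/card_gt0P; exists o0.
have fiber_gt0 o : (0 < INR #|[pred w | Y w == Y o]|)%R.
  by apply/lt_0_INR/ltP/card_gt0P; exists o; rewrite inE.
have -> : Rsum (fun o => log2 (INR #|[pred w | Y w == Y o]|) / INR #|O|)%R =
          (/ INR #|O| * Rsum (fun o => log2 (INR #|[pred w | Y w == Y o]|)))%R.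
  by rewrite -RsumZ; apply: eq_bigr => o _; rewrite /Rdiv Rmult_comm.
apply: Rle_trans (Rmult_le_compat_l _ _ _ _ (sum_log2_le o0 fiber_gt0)) _.
  exact/Rlt_le/Rinv_0_lt_compat.
rewrite -Rmult_assoc Rinv_l ?Rmult_1_l; last lra.
apply: log2_le; first by apply: Rdiv_lt_0_compat => //; exact: Rsum_gt0.
rewrite -INR_sum; apply: (Rmult_le_reg_l (INR #|O|)) => //.
rewrite /Rdiv -Rmult_assoc (Rmult_comm (INR #|O|)) Rmult_assoc.
by rewrite Rinv_r ?Rmult_1_r //; lra.
Qed.

End DeterminedEntropy.

Section CoordinateFibers.
Variables (I : finType) (T_ : I -> finType) (i : I).

Definition coord_family (y : T_ i) : forall j, pred (T_ j) :=
  dfwith (T := fun j => pred (T_ j)) (fun j => predT) (pred1 y).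

Lemma coord_fiberE (y : T_ i) :
  [pred f : {dffun forall j, T_ j} | f i == y] =i finfun.family (coord_family y).
Proof.
move=> f; rewrite !inE; apply/eqP/familyP => [<- j | /(_ i)].
  by rewrite /coord_family; case: dfwithP => [|j' ij']; rewrite inE.
by rewrite /coord_family dfwith_in inE => /eqP.
Qed.

Lemma card_coord_fiber_const (y y' : T_ i) :
  #|[pred f : {dffun forall j, T_ j} | f i == y]| =
  #|[pred f : {dffun forall j, T_ j} | f i == y']|.
Proof.
rewrite !(eq_card (coord_fiberE _)) !card_family; congr foldr; apply: eq_map => j.
rewrite /coord_family; case: (eqVneq i j) => [<-|ij];
  by rewrite ?dfwith_in ?dfwith_out // !card1.
Qed.

Lemma card_coord_fiber (y : T_ i) :
  #|[pred f : {dffun forall j, T_ j} | f i == y]| * #|T_ i| =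
  #|{: {dffun forall j, T_ j}}|.
Proof.
rewrite -[in RHS]sum1_card.
rewrite (partition_big (fun f : {dffun forall j, T_ j} => f i) predT) //=.
rewrite mulnC -sum_nat_const; apply: eq_bigr => y' _.
by rewrite (card_coord_fiber_const y y') -sum1_card.
Qed.

End CoordinateFibers.

Lemma Nat_pow2E k : 2 ^ k = expn 2 k.
Proof. by elim: k => // k IH; rewrite expnS -IH. Qed.

Lemma pow2_add_le e f : 2 ^ e + 2 ^ f <= 2 ^ e * 2 ^ (f - e).+1.
Proof.
rewrite !Nat_pow2E expnS.
have f_le : expn 2 f <= expn 2 e * expn 2 (f - e) by rewrite -expnD leq_exp2l //; lia.
have := expn_gt0 2 (f - e); nia.
Qed.

Lemma Rmaxf_ge (M : nat) (r : 'I_M -> R) (i : 'I_M) : (r i <= Rmaxf r)%R.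
Proof.
rewrite /Rmaxf; elim: (index_enum _) (mem_index_enum i) => // j s IH.
rewrite big_cons in_cons => /orP[/eqP <- | /IH]; first exact: Rmax_l.
by move/Rle_trans; apply; exact: Rmax_r.
Qed.

Lemma Rmaxf_ge0 (M : nat) (r : 'I_M -> R) : (0 <= Rmaxf r)%R.
Proof.
rewrite /Rmaxf; elim: (index_enum _) => [|j s IH].
  by rewrite big_nil; exact: Rle_refl.
by rewrite big_cons; apply: Rle_trans IH (Rmax_r _ _).
Qed.

Lemma rate_exp_le n x : (0 <= x)%R -> (INR (rate_exp n x) <= INR n * x)%R.
Proof.
move=> x_ge0.
have nx_ge0 : (0 <= INR n * x)%R by apply: Rmult_le_pos => //; exact: pos_INR.
have [fl_le _] := base_Int_part (INR n * x); rewrite /rate_exp.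
case: (Int_part _) fl_le => [|p|p] //= fl_le.
by rewrite INR_IZR_INZ Znat.positive_nat_Z.
Qed.

Lemma rate_exp_ge n x : (INR n * x - 1 <= INR (rate_exp n x))%R.
Proof.
have [_ fl_gt] := base_Int_part (INR n * x); rewrite /rate_exp.
suff : (IZR (Int_part (INR n * x)) <= INR (Z.to_nat (Int_part (INR n * x))))%R by lra.
case: (Int_part _) => [|p|p] /=; first exact: Rle_refl.
  by rewrite INR_IZR_INZ Znat.positive_nat_Z; exact: Rle_refl.
exact/Rlt_le/IZR_lt.
Qed.

Section Exponents.
Variables (M : nat) (r : 'I_M -> R) (eps : R) (n : nat).
Hypotheses (r_gt0 : forall i, (0 < r i)%R) (eps_gt0 : (0 < eps)%R).

Lemma tot_exp_le : (INR (tot_exp r n) <= INR n * Rsum r)%R.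
Proof.
rewrite /tot_exp INR_sum -RsumZ; apply: Rsum_le => i.
exact/rate_exp_le/Rlt_le.
Qed.

Lemma bin_size_exp_le :
  (INR (tot_exp r n - bin_exp r eps n) <= INR n * (Rmaxf r + eps) + 1)%R.
Proof.
have maxe_ge0 : (0 <= INR n * (Rmaxf r + eps))%R.
  by apply: Rmult_le_pos; [exact: pos_INR | have := Rmaxf_ge0 r; lra].
rewrite /bin_exp; case: leqP => [bin_le | _]; last by rewrite subnn /=; lra.
rewrite minus_INR; last exact/leP.
have := rate_exp_ge n (Rkey r - eps); have := tot_exp_le; rewrite /Rkey; lra.
Qed.

Lemma excess_exp_le (m : 'I_M) :
  (INR ((tot_exp r n - bin_exp r eps n) - msg_exp r n m).+1 <=
   INR n * (Rmaxf r - r m + eps) + 3)%R.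
Proof.
have gap_ge0 : (0 <= INR n * (Rmaxf r - r m + eps))%R.
  by apply: Rmult_le_pos; [exact: pos_INR | have := Rmaxf_ge r m; lra].
rewrite S_INR.
case: (leqP (msg_exp r n m) (tot_exp r n - bin_exp r eps n)) => [me_le | /ltnW le_me].
  rewrite minus_INR; last exact/leP.
  have := rate_exp_ge n (r m); have := bin_size_exp_le; rewrite /msg_exp; lra.
by move: le_me; rewrite -subn_eq0 => /eqP ->; rewrite /=; lra.
Qed.

End Exponents.

Section BinningScheme.
Variables (M : nat) (r : 'I_M -> R) (eps : R) (n : nat) (m : 'I_M).
Local Notation W := (msg_tuple r n).
Local Notation C := (codebook r eps n).
Local Notation O := (sample r eps n).
(* log2 (bin_size / msg_size m), truncated at 0 *)
Let excess := (tot_exp r n - bin_exp r eps n) - msg_exp r n m.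

Lemma rv_WM_cond_inj : injective (fun o : O => (rv_WM o, rv_cond m o)).
Proof. by move=> [c a] [c' a'] [-> _ _ ->]. Qed.

Lemma card_rv_cond_fiber (c : C) (a : W) :
  #|[pred o : O | rv_cond m o == rv_cond m (c, a)]| =
  #|[pred a' in [pred x : W | x m == a m] | val c a' == val c a]|.
Proof.
rewrite -[in RHS](card_imset _ (fun x y (e : (c, x) = (c, y)) => congr1 snd e)).
apply: eq_card => -[c' a']; rewrite !inE /rv_cond /rv_K /= !xpair_eqE.
apply/idP/imsetP => [/andP[/andP[a'm ca'] /eqP c'c] | [x x_in [-> ->]]].
  by subst c'; exists a'; rewrite // !inE a'm ca'.
by move: x_in; rewrite !inE eqxx andbT.
Qed.

Lemma sum_bin_meet_fiber_le (a : W) :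
  \sum_(c : C) #|[pred a' in [pred x : W | x m == a m] | val c a' == val c a]| <=
  #|{: C}| * 2 ^ excess.+1.
Proof.
set S := \sum_(c : C) _; set A := [pred x : W | x m == a m].
have a_in : a \in A by rewrite inE.
have meet_le : S * #|W| <= #|{: C}| * (#|W| + #|A| * bin_size r eps n).
  exact: (@sum_card_bin_meet_le W _ (bin_size r eps n) A a a_in).
have fiber_mul : #|A| * msg_size r n m = #|W|.
  by have := card_coord_fiber (a m); rewrite card_ord.
have A_gt0 : 0 < #|A| by apply/card_gt0P; exists a.
have q_gt0 : 0 < msg_size r n m by rewrite /msg_size Nat_pow2E expn_gt0.
have size_le := pow2_add_le (msg_exp r n m) (tot_exp r n - bin_exp r eps n).
rewrite -/(msg_size r n m) -/(bin_size r eps n) -/excess in size_le.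
rewrite -(@leq_pmul2r (#|A| * msg_size r n m)) ?muln_gt0 ?A_gt0 //.
apply: leq_trans (_ : _ <= #|{: C}| * (#|A| * (msg_size r n m + bin_size r eps n))) _.
  by rewrite mulnDr fiber_mul.
by rewrite mulnAC -!mulnA !leq_mul2l size_le !orbT.
Qed.

Lemma sum_rv_cond_fiber_le :
  \sum_(o : O) #|[pred w | rv_cond m w == rv_cond m o]| <= #|{: O}| * 2 ^ excess.+1.
Proof.
rewrite (eq_bigr (fun o : O => #|[pred w | rv_cond m w == rv_cond m (o.1, o.2)]|)) //.
rewrite -(pair_bigA _ (fun (c : C) (a : W) =>
                        #|[pred w | rv_cond m w == rv_cond m (c, a)]|)).
rewrite exchange_big; apply: (@leq_trans (\sum_(a : W) #|{: C}| * 2 ^ excess.+1)).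
  apply: leq_sum => a _; under eq_bigr do rewrite card_rv_cond_fiber.
  exact: sum_bin_meet_fiber_le.
by rewrite sum_nat_const card_prod mulnA [#|W| * _]mulnC.
Qed.

Lemma cond_entropy_le_excess :
  (cond_entropy (@rv_WM M r eps n) (@rv_cond M r eps n m) <= INR excess.+1)%R.
Proof.
rewrite -log2_pow2; apply: cond_entropy_determined_le; first exact: rv_WM_cond_inj.
  by rewrite -INR_1; apply/le_INR/leP; rewrite Nat_pow2E expn_gt0.
by rewrite -mult_INR; apply/le_INR/leP; exact: sum_rv_cond_fiber_le.
Qed.

End BinningScheme.

Theorem lemma1 (M : nat) (HM : (2 <= M)%N) (r : 'I_M -> R)
  (Hr : forall i : 'I_M, (0 < r i)%R) :
  exists delta : R -> R,
    (forall eta : R, (0 < eta)%R ->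
       exists e0 : R, (0 < e0)%R /\
         forall eps : R, (0 < eps)%R -> (eps < e0)%R -> (Rabs (delta eps) < eta)%R) /\
    (forall eps : R, (0 < eps)%R -> forall m : 'I_M,
       exists N : nat, forall n : nat, (N <= n)%N ->
         (cond_entropy (@rv_WM M r eps n) (@rv_cond M r eps n m)
           <= INR n * (Rmaxf r - r m + delta eps))%R).
Proof.
exists (fun eps => 2 * eps)%R; split.
  move=> eta eta_gt0; exists (eta / 2)%R; split=> [|eps eps_gt0 eps_lt]; first lra.
  by rewrite Rabs_right; lra.
move=> eps eps_gt0 m; have [N N_large] := INR_archimed eps 3 eps_gt0.
exists N => n N_le_n.
have : (INR N * eps <= INR n * eps)%R.
  by apply: Rmult_le_compat_r; [lra | exact/le_INR/leP].
have := @excess_exp_le M r eps n Hr eps_gt0 m.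
have := cond_entropy_le_excess r eps n m.
lra.
Qed.
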